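(* Let $\lambda_0,\lambda_1>0$, let $\boldsymbol\alpha_0^\star$ and $\boldsymbol\alpha_1^\star$ be the optimal solutions of $\max_{\boldsymbol\alpha\ge\mathbf0}D_{\lambda_0}(\boldsymbol\alpha)$ and $\max_{\boldsymbol\alpha\ge\mathbf0}D_{\lambda_1}(\boldsymbol\alpha)$, respectively, and let $\boldsymbol\alpha_0\in\mathbb R^{2nK}$ and $\epsilon\ge0$ satisfy $\|\boldsymbol\alpha_0-\boldsymbol\alpha_0^\star\|_2\le\epsilon$. Then $$\Big\|\boldsymbol\alpha_1^\star-\frac{\lambda_0+\lambda_1}{2\lambda_0}\boldsymbol\alpha_0\Big\|_2\le\Big\|\frac{\lambda_0-\lambda_1}{2\lambda_0}\boldsymbol\alpha_0\Big\|_2+\Big(\frac{\lambda_0+\lambda_1}{2\lambda_0}+\frac{|\lambda_0-\lambda_1|}{2\lambda_0}\Big)\epsilon.$$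
   Context: Let $n,K,p\ge1$ be integers, $[n]=\{1,\dots,n\}$. For each $i\in[n]$ let $\mathbf x_i\in\mathbb R^p$ have nonnegative entries and let $\mathcal D_i,\mathcal S_i\subseteq[n]$ be sets of size $K$. Put $\mathbf c_{ij}=(\mathbf x_i-\mathbf x_j)\circ(\mathbf x_i-\mathbf x_j)$ (entrywise product). Vectors in $\mathbb R^{2nK}$ are indexed by the pairs $(i,l)$, $l\in\mathcal D_i$ (''different-class pairs'') and $(i,j)$, $j\in\mathcal S_i$ (''same-class pairs''). $\mathbf C\in\mathbb R^{p\times2nK}$ has column $\mathbf c_{il}$ for each different-class pair and $-\mathbf c_{ij}$ for each same-class pair. Fix $L\ge U\ge0$, $\eta>0$; let $\mathbf t\in\mathbb R^{2nK}$ have entry $L$ at different-class pairs and $-U$ at same-class pairs; $[z]_+=\max\{z,0\}$ entrywise; $\mathbf1$ the all-ones vector. For $\lambda>0$ and $\boldsymbol\alpha\in\mathbb R^{2nK}_{\ge0}$ define $$D_\lambda(\boldsymbol\alpha)=-\frac14\|\boldsymbol\alpha\|_2^2+\mathbf t^\top\boldsymbol\alpha-\frac{\lambda\eta}{2}\|\mathbf m_\lambda(\boldsymbol\alpha)\|_2^2,\qquad\mathbf m_\lambda(\boldsymbol\alpha)=\frac1{\lambda\eta}[\mathbf C\boldsymbol\alpha-\lambda\mathbf1]_+,$$ the dual of the primal problem $\min_{\mathbf m\ge\mathbf0}\sum_i\big[\sum_{l\in\mathcal D_i}([L-\mathbf m^\top\mathbf c_{il}]_+)^2+\sum_{j\in\mathcal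 S_i}([-U+\mathbf m^\top\mathbf c_{ij}]_+)^2\big]+\lambda(\mathbf m^\top\mathbf1+\frac\eta2\|\mathbf m\|_2^2)$. *)

From HB Require Import structures.
From mathcomp Require Import all_boot all_order all_algebra.
From mathcomp Require Import reals.
Set Implicit Arguments. Unset Strict Implicit. Unset Printing Implicit Defensive.
Import Order.TTheory GRing.Theory Num.Theory.
Local Open Scope ring_scope.

(* Pair index set of R^{2nK}: (i, k, true) is the different-class pair
   (i, D i k) and (i, k, false) is the same-class pair (i, S i k).
   The size-K sets D_i, S_i are given by injective enumerations
   D i, S i : 'I_K -> 'I_n. *)
Definition pidx (n K : nat) := ('I_n * 'I_K * bool)%type.

Section Dual.
Variables (R : realType) (n K p : nat).
Variables (x : 'I_n -> 'I_p -> R) (D S : 'I_n -> 'I_K -> 'I_n).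
Variables (L U eta : R).

Definition cvec (i j : 'I_n) : 'I_p -> R := fun r => (x i r - x j r) ^+ 2.

Definition Ccol (a : pidx n K) : 'I_p -> R :=
  let: (i, k, b) := a in
  if b then cvec i (D i k) else fun r => - cvec i (S i k) r.

Definition Cmul (alpha : pidx n K -> R) : 'I_p -> R :=
  fun r => \sum_(a : pidx n K) Ccol a r * alpha a.

Definition tvec (a : pidx n K) : R := let: (_, _, b) := a in if b then L else - U.

Definition sqnormI (v : pidx n K -> R) : R := \sum_(a : pidx n K) v a ^+ 2.
Definition sqnormP (v : 'I_p -> R) : R := \sum_(r < p) v r ^+ 2.

Definition mvec (lam : R) (alpha : pidx n K -> R) : 'I_p -> R :=
  fun r => (lam * eta)^-1 * Num.max (Cmul alpha r - lam) 0.

Definition Dual (lam : R) (alpha : pidx n K -> R) : R :=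
  - (4%:R)^-1 * sqnormI alpha + \sum_(a : pidx n K) tvec a * alpha a
  - lam * eta / 2%:R * sqnormP (mvec lam alpha).

Definition dual_opt (lam : R) (alpha : pidx n K -> R) : Prop :=
  (forall a, 0 <= alpha a) /\
  (forall beta : pidx n K -> R, (forall a, 0 <= beta a) ->
     Dual lam beta <= Dual lam alpha).
End Dual.

Definition norm2 (R : realType) (n K : nat) (v : pidx n K -> R) : R :=
  Num.sqrt (sqnormI v).

(* Along every segment, D_lam is bounded below by its first-order expansion
   minus a quadratic term, so an optimum a of D_lam over the nonnegative
   orthant satisfies <grad D_lam(a), b - a> <= 0 for all b >= 0, where
   grad D_lam(a) = t - a/2 - (lam eta)^-1 C^T [C a - lam 1]_+.
   For the optima a0s, a1s of D_lam0, D_lam1, test this at b = (lam0/lam1) a1s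
   and at b = (lam1/lam0) a0s respectively, and add with weights lam1, lam0:
   the t-terms cancel and the hinge terms have a sign because z |-> [z - 1]_+
   is nondecreasing, leaving <a1s - a0s, lam0 a1s - lam1 a0s> <= 0.
   Completing the square, this says that a1s lies in the ball of radius
   |lam0 - lam1| / (2 lam0) ||a0s|| around (lam0 + lam1) / (2 lam0) a0s; the
   triangle inequality then replaces a0s by its approximation a0. *)

From HB Require Import structures.
From mathcomp Require Import all_boot all_order all_algebra.
From mathcomp Require Import reals.
From mathcomp Require Import ring lra.

Set Implicit Arguments.
Unset Strict Implicit.
Unset Printing Implicit Defensive.
Import Order.TTheory GRing.Theory Num.Theory.
Local Open Scope ring_scope.

Section EuclideanSpace.
Variables (R : rcfType) (I : finType).
Implicit Types (u v w : I -> R).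

Definition dot u v := \sum_i u i * v i.
Definition sqnorm v := \sum_i v i ^+ 2.
Definition enorm v := Num.sqrt (sqnorm v).

Lemma dotDr u v w : dot u (fun i => v i + w i) = dot u v + dot u w.
Proof. by rewrite -big_split; apply: eq_bigr => i _; rewrite mulrDr. Qed.

Lemma dotBl u v w : dot (fun i => u i - v i) w = dot u w - dot v w.
Proof. by rewrite -sumrB; apply: eq_bigr => i _; rewrite mulrBl. Qed.

Lemma dotBr u v w : dot u (fun i => v i - w i) = dot u v - dot u w.
Proof. by rewrite -sumrB; apply: eq_bigr => i _; rewrite mulrBr. Qed.

Lemma dotZl c u v : dot (fun i => c * u i) v = c * dot u v.
Proof. by rewrite mulr_sumr; apply: eq_bigr => i _; rewrite mulrA. Qed.

Lemma dotZr c u v : dot u (fun i => c * v i) = c * dot u v.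
Proof. by rewrite mulr_sumr; apply: eq_bigr => i _; rewrite mulrCA. Qed.

Lemma sqnorm_ge0 v : 0 <= sqnorm v.
Proof. by apply: sumr_ge0 => i _; apply: sqr_ge0. Qed.

Lemma sqnormZ c v : sqnorm (fun i => c * v i) = c ^+ 2 * sqnorm v.
Proof. by rewrite mulr_sumr; apply: eq_bigr => i _; rewrite exprMn. Qed.

Lemma sqnorm_addZ u v s :
  sqnorm (fun i => u i + s * v i) = sqnorm u + 2 * s * dot u v + s ^+ 2 * sqnorm v.
Proof.
rewrite /sqnorm /dot !mulr_sumr -!big_split; apply: eq_bigr => i _ /=; ring.
Qed.

Lemma lagrange_identity u v :
  \sum_i \sum_j (u i * v j - u j * v i) ^+ 2
  = 2 * (sqnorm u * sqnorm v - dot u v ^+ 2).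
Proof.
have uv_vu : sqnorm u * sqnorm v = \sum_i \sum_j u i ^+ 2 * v j ^+ 2.
  by rewrite big_distrlr.
have vu_uv : sqnorm u * sqnorm v = \sum_i \sum_j u j ^+ 2 * v i ^+ 2.
  by rewrite uv_vu exchange_big.
have dot_sqr : dot u v ^+ 2 = \sum_i \sum_j u i * v i * (u j * v j).
  by rewrite expr2 big_distrlr.
rewrite (_ : 2 * _ = sqnorm u * sqnorm v + sqnorm u * sqnorm v - 2 * dot u v ^+ 2);
  last by ring.
rewrite {1}uv_vu vu_uv dot_sqr mulr_sumr -big_split -sumrB; apply: eq_bigr => i _.
by rewrite mulr_sumr -big_split -sumrB; apply: eq_bigr => j _ /=; ring.
Qed.

Lemma dot_sqr_le u v : dot u v ^+ 2 <= sqnorm u * sqnorm v.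
Proof.
rewrite -subr_ge0 -(pmulr_rge0 _ (ltr0Sn R 1)) -lagrange_identity.
by apply: sumr_ge0 => i _; apply: sumr_ge0 => j _; apply: sqr_ge0.
Qed.

Lemma enorm_ge0 v : 0 <= enorm v.
Proof. exact: sqrtr_ge0. Qed.

Lemma eq_enorm u v : u =1 v -> enorm u = enorm v.
Proof. by move=> eq_uv; congr Num.sqrt; apply: eq_bigr => i _; rewrite eq_uv. Qed.

Lemma enormZ c v : enorm (fun i => c * v i) = `|c| * enorm v.
Proof. by rewrite /enorm sqnormZ sqrtrM ?sqr_ge0 // sqrtr_sqr. Qed.

Lemma dot_le_enorm u v : dot u v <= enorm u * enorm v.
Proof.
rewrite (le_trans (ler_norm _)) // -sqrtr_sqr -sqrtrM ?sqnorm_ge0 //.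
by rewrite ler_sqrt ?mulr_ge0 ?sqnorm_ge0 // dot_sqr_le.
Qed.

Lemma enormD u v : enorm (fun i => u i + v i) <= enorm u + enorm v.
Proof.
rewrite -ler_sqr ?nnegrE ?addr_ge0 ?enorm_ge0 // sqr_sqrtr ?sqnorm_ge0 //.
have -> : sqnorm (fun i => u i + v i) = sqnorm (fun i => u i + 1 * v i).
  by apply: eq_bigr => i _; rewrite mul1r.
rewrite sqnorm_addZ sqrrD !sqr_sqrtr ?sqnorm_ge0 // expr1n mul1r.
have := dot_le_enorm u v; lra.
Qed.

Lemma enorm_le_add u v w : w =1 (fun i => u i + v i) ->
  enorm w <= enorm u + enorm v.
Proof. by move=> /eq_enorm ->; apply: enormD. Qed.

Lemma enorm_center_le l0 l1 u v : 0 < l0 ->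
  dot (fun i => v i - u i) (fun i => l0 * v i - l1 * u i) <= 0 ->
  enorm (fun i => v i - (l0 + l1) / (2 * l0) * u i)
  <= `|(l0 - l1) / (2 * l0)| * enorm u.
Proof.
move=> l0_gt0 dot_le0; rewrite -enormZ ler_sqrt ?sqnorm_ge0 //.
have -> : sqnorm (fun i => v i - (l0 + l1) / (2 * l0) * u i)
    = sqnorm (fun i => (l0 - l1) / (2 * l0) * u i)
      + l0^-1 * dot (fun i => v i - u i) (fun i => l0 * v i - l1 * u i).
  rewrite /sqnorm /dot mulr_sumr -big_split; apply: eq_bigr => i _ /=.
  by field; rewrite gt_eqF.
by rewrite gerDl pmulr_rle0 ?invr_gt0.
Qed.
End EuclideanSpace.

Section RealInequalities.
Variable R : realFieldType.
Implicit Types (y w G Q : R).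

Lemma sqr_max0_addr_le y w : Num.max (y + w) 0 ^+ 2 <= (Num.max y 0 + w) ^+ 2.
Proof. by case: (lerP 0 y) => hy; case: (lerP 0 (y + w)) => hyw; nra. Qed.

(* Monotonicity of [u |-> max (u - 1) 0] at [u = z0 / l0] and [u = z1 / l1],
   with the denominators cleared. *)
Lemma max0_cross_ge0 (l0 l1 z0 z1 : R) : 0 < l0 -> 0 < l1 ->
  0 <= (l0 * z1 - l1 * z0) * (l0 * Num.max (z1 - l1) 0 - l1 * Num.max (z0 - l0) 0).
Proof.
move=> l0_gt0 l1_gt0.
case: (lerP 0 (z0 - l0)) => h0; case: (lerP 0 (z1 - l1)) => h1.
- rewrite (_ : _ * _ = (l0 * z1 - l1 * z0) ^+ 2) ?sqr_ge0 //; ring.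
- by rewrite mulr0 sub0r mulr_le0 ?oppr_le0 ?mulr_ge0 //; nra.
- by rewrite mulr0 subr0 mulr_ge0 ?mulr_ge0 //; nra.
- by rewrite !mulr0 subr0 mulr0.
Qed.

Lemma le0_of_small_quadratic G Q : 0 <= Q ->
  (forall s, 0 < s -> s <= 1 -> s * G <= s ^+ 2 * Q) -> G <= 0.
Proof.
move=> Q_ge0 small; rewrite leNgt; apply/negP => G_gt0.
have GQ_gt0 : 0 < G + Q by lra.
have s_gt0 : 0 < G / (G + Q) by rewrite divr_gt0.
have s_le1 : G / (G + Q) <= 1 by rewrite ler_pdivrMr // mul1r lerDl.
have := small _ s_gt0 s_le1; rewrite expr2 -mulrA ler_pM2l // mulrAC ler_pdivlMr //.
nra.
Qed.
End RealInequalities.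

Section DualFirstOrder.
Variables (R : realType) (n K p : nat) (x : 'I_n -> 'I_p -> R).
Variables (D S : 'I_n -> 'I_K -> 'I_n) (L U eta : R).
Hypothesis eta_gt0 : 0 < eta.
Implicit Types (lam s c : R) (a d : pidx n K -> R).

Local Notation Cmul := (Cmul x D S).
Local Notation Dual := (Dual x D S L U eta).
Local Notation dual_opt := (dual_opt x D S L U eta).

Definition hinge lam a (r : 'I_p) := Num.max (Cmul a r - lam) 0.

(* [Dual_dir lam a d] is the directional derivative of [Dual lam] at [a] along
   [d], and [Dual_curv lam d] bounds its curvature along [d]. *)
Definition Dual_dir lam a d :=
  dot (tvec L U) d - dot a d / 2 - (lam * eta)^-1 * dot (hinge lam a) (Cmul d).

Definition Dual_curv lam d :=
  sqnorm d / 4 + (2 * lam * eta)^-1 * sqnorm (Cmul d).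

Lemma CmulE a r : Cmul a r = dot (fun i => Ccol x D S i r) a.
Proof. by []. Qed.

Lemma DualE lam a : 0 < lam ->
  Dual lam a = - 4^-1 * sqnorm a + dot (tvec L U) a
               - (2 * lam * eta)^-1 * sqnorm (hinge lam a).
Proof.
move=> lam_gt0.
rewrite /Dual (_ : sqnormP _ = (lam * eta)^-1 ^+ 2 * sqnorm (hinge lam a));
  last exact: sqnormZ.
by congr (_ - _); field; rewrite !gt_eqF.
Qed.

Lemma Dual_dirZ lam a c d :
  Dual_dir lam a (fun i => c * d i) = c * Dual_dir lam a d.
Proof.
rewrite /Dual_dir !dotZr.
have -> : dot (hinge lam a) (Cmul (fun i => c * d i))
    = c * dot (hinge lam a) (Cmul d).
  by rewrite -dotZr; apply: eq_bigr => r _; rewrite !CmulE dotZr.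
by ring.
Qed.

Lemma Dual_quadratic_minorant lam a d s : 0 < lam ->
  Dual lam a + s * Dual_dir lam a d - s ^+ 2 * Dual_curv lam d
  <= Dual lam (fun i => a i + s * d i).
Proof.
move=> lam_gt0.
have c_gt0 : 0 < (2 * lam * eta)^-1 by rewrite invr_gt0 !mulr_gt0.
have hinge_le : sqnorm (hinge lam (fun i => a i + s * d i))
    <= sqnorm (hinge lam a) + 2 * s * dot (hinge lam a) (Cmul d)
       + s ^+ 2 * sqnorm (Cmul d).
  rewrite -sqnorm_addZ; apply: ler_sum => r _.
  by rewrite /hinge CmulE dotDr dotZr addrAC sqr_max0_addr_le.
have := ler_wpM2l (ltW c_gt0) hinge_le.
rewrite !DualE // /Dual_dir /Dual_curv sqnorm_addZ dotDr dotZr.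
rewrite (_ : (lam * eta)^-1 = 2 * (2 * lam * eta)^-1); last by field; rewrite !gt_eqF.
nra.
Qed.

Lemma dual_opt_dir_le0 lam a d : 0 < lam -> dual_opt lam a ->
  (forall i, 0 <= a i + d i) -> Dual_dir lam a d <= 0.
Proof.
move=> lam_gt0 [a_ge0 a_max] ad_ge0.
apply: (le0_of_small_quadratic (Q := Dual_curv lam d)).
  by rewrite addr_ge0 ?mulr_ge0 ?divr_ge0 ?sqnorm_ge0 ?invr_ge0 ?mulr_ge0 ?ltW.
move=> s s_gt0 s_le1.
have feasible i : 0 <= a i + s * d i.
  have := a_ge0 i; have := ad_ge0 i; nra.
have := Dual_quadratic_minorant a d s lam_gt0.
have := a_max _ feasible; lra.
Qed.

Lemma dual_opt_cross_le0 lam0 lam1 a0 a1 : 0 < lam0 -> 0 < lam1 ->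
  dual_opt lam0 a0 -> dual_opt lam1 a1 ->
  dot (fun i => a1 i - a0 i) (fun i => lam0 * a1 i - lam1 * a0 i) <= 0.
Proof.
move=> lam0_gt0 lam1_gt0 opt0 opt1.
set w := fun i => lam0 * a1 i - lam1 * a0 i.
have dir0 : Dual_dir lam0 a0 w <= 0.
  have := dual_opt_dir_le0 (d := fun i => lam1^-1 * w i) lam0_gt0 opt0.
  rewrite Dual_dirZ pmulr_rle0 ?invr_gt0 //; apply=> i.
  rewrite (_ : _ + _ = lam0 / lam1 * a1 i); last by rewrite /w; field; rewrite gt_eqF.
  exact: mulr_ge0 (divr_ge0 (ltW lam0_gt0) (ltW lam1_gt0)) (opt1.1 i).
have dir1 : 0 <= Dual_dir lam1 a1 w.
  have := dual_opt_dir_le0 (d := fun i => - lam0^-1 * w i) lam1_gt0 opt1.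
  rewrite Dual_dirZ mulNr oppr_le0 pmulr_rge0 ?invr_gt0 //; apply=> i.
  rewrite (_ : _ + _ = lam1 / lam0 * a0 i); last by rewrite /w; field; rewrite gt_eqF.
  exact: mulr_ge0 (divr_ge0 (ltW lam1_gt0) (ltW lam0_gt0)) (opt0.1 i).
set h0 := hinge lam0 a0; set h1 := hinge lam1 a1.
have hinge_ge0 : 0 <= dot (fun r => lam0 * h1 r - lam1 * h0 r) (Cmul w).
  apply: sumr_ge0 => r _; rewrite mulrC CmulE dotBr !dotZr -!CmulE.
  exact: max0_cross_ge0.
have cross : Dual_dir lam0 a0 w - Dual_dir lam1 a1 w
    = dot (fun i => a1 i - a0 i) w / 2
      + (lam0 * lam1 * eta)^-1 * dot (fun r => lam0 * h1 r - lam1 * h0 r) (Cmul w).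
  by rewrite /Dual_dir !dotBl !dotZl; field; rewrite !gt_eqF.
have : 0 <= (lam0 * lam1 * eta)^-1 * dot (fun r => lam0 * h1 r - lam1 * h0 r) (Cmul w).
  by apply: mulr_ge0 => //; rewrite invr_ge0 !mulr_ge0 // ltW.
lra.
Qed.

End DualFirstOrder.

Lemma norm2E (R : realType) (n K : nat) (v : pidx n K -> R) : norm2 v = enorm v.
Proof. by []. Qed.

Theorem theorem3 (R : realType) (n K p : nat)
  (x : 'I_n -> 'I_p -> R) (D S : 'I_n -> 'I_K -> 'I_n) (L U eta : R)
  (hn : (1 <= n)%N) (hK : (1 <= K)%N) (hp : (1 <= p)%N)
  (hx : forall i r, 0 <= x i r)
  (hD : forall i, injective (D i)) (hS : forall i, injective (S i))
  (hUL : U <= L) (hU : 0 <= U) (heta : 0 < eta)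
  (lam0 lam1 : R) (hl0 : 0 < lam0) (hl1 : 0 < lam1)
  (a0s a1s : pidx n K -> R)
  (h0s : dual_opt x D S L U eta lam0 a0s)
  (h1s : dual_opt x D S L U eta lam1 a1s)
  (a0 : pidx n K -> R) (eps : R) (heps : 0 <= eps)
  (hclose : norm2 (fun a => a0 a - a0s a) <= eps) :
  norm2 (fun a => a1s a - (lam0 + lam1) / (2%:R * lam0) * a0 a)
  <= norm2 (fun a => (lam0 - lam1) / (2%:R * lam0) * a0 a)
     + ((lam0 + lam1) / (2%:R * lam0) + `|lam0 - lam1| / (2%:R * lam0)) * eps.
Proof.
rewrite !norm2E enormZ in hclose *.
set c := (lam0 + lam1) / (2 * lam0).
have c_ge0 : 0 <= c by rewrite divr_ge0 ?mulr_ge0 ?addr_ge0 ?ltW.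
have -> : `|lam0 - lam1| / (2 * lam0) = `|(lam0 - lam1) / (2 * lam0)|.
  by rewrite normrM normfV [`|2 * lam0|]ger0_norm // mulr_ge0 // ltW.
set r := `|(lam0 - lam1) / (2 * lam0)|.
have ball : enorm (fun a => a1s a - c * a0s a) <= r * enorm a0s.
  exact/enorm_center_le/(dual_opt_cross_le0 heta hl0 hl1 h0s h1s).
have shift_a0 : enorm (fun a => a1s a - c * a0 a)
    <= enorm (fun a => a1s a - c * a0s a) + c * enorm (fun a => a0 a - a0s a).
  rewrite -[c in c * _]ger0_norm // -normrN -enormZ.
  by apply: enorm_le_add => a; ring.
have shift_a0s : enorm a0s <= enorm a0 + enorm (fun a => a0 a - a0s a).
  rewrite -[X in _ + X]mul1r -normrN1 -enormZ.
  by apply: enorm_le_add => a; ring.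
have r_ge0 : 0 <= r := normr_ge0 _.
have := ler_wpM2l r_ge0 shift_a0s; have := ler_wpM2l r_ge0 hclose.
have := ler_wpM2l c_ge0 hclose; lra.
Qed.
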